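(* In the setting of the context, the contamination of $\widehat{\boldsymbol\alpha}_{2,\mathsf{real}}$ satisfies $$\mathsf{CN}_r(t)=\sqrt{\mathbf z_t^\top\mathbf C\,\mathbf z_t}=|1-\mathsf{SU}_r(t)|\sqrt{\mathbf z_t^\top\widetilde{\mathbf C}\,\mathbf z_t},$$ where $\mathbf C=\mathbf A^{-1}\big(\sum_{j\ne t}\lambda_j^2\mathbf z_j\mathbf z_j^\top\big)\mathbf A^{-1}$ and $\widetilde{\mathbf C}=\mathbf A_{-t}^{-1}\big(\sum_{j\ne t}\lambda_j^2\mathbf z_j\mathbf z_j^\top\big)\mathbf A_{-t}^{-1}$.
   Context: Setting: $d\ge n$, $\lambda_1,\dots,\lambda_d>0$; $\mathbf z_1,\dots,\mathbf z_d$ i.i.d. $\mathcal N(\mathbf0,\mathbf I_n)$; $\boldsymbol\Phi_{\mathsf{train}}=[\sqrt{\lambda_1}\mathbf z_1,\dots,\sqrt{\lambda_d}\mathbf z_d]$ (rows i.i.d. $\mathcal N(\mathbf0,\mathrm{diag}(\lambda))$); $\mathbf A=\sum_j\lambda_j\mathbf z_j\mathbf z_j^\top$, $\mathbf A_{-t}=\sum_{j\ne t}\lambda_j\mathbf z_j\mathbf z_j^\top$. Target $\boldsymbol\alpha^*=\mathbf e_t/\sqrt{\lambda_t}$, so the real outputs are $\mathbf Z_{\mathsf{train}}=\mathbf z_t$. $\widehat{\boldsymbol\alpha}_{2,\mathsf{real}}$ is the minimum-$\ell_2$-norm solution of $\boldsymbol\Phi_{\mathsf{train}}\boldsymbol\alpha=\mathbf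 z_t$; $\mathsf{SU}_r(t)=\sqrt{\lambda_t}(\widehat{\boldsymbol\alpha}_{2,\mathsf{real}})_t$, $\mathsf{CN}_r(t)=\sqrt{\sum_{j\ne t}\lambda_j(\widehat{\boldsymbol\alpha}_{2,\mathsf{real}})_j^2}$. *)

From HB Require Import structures.
From mathcomp Require Import all_boot all_order all_algebra.
Set Implicit Arguments. Unset Strict Implicit. Unset Printing Implicit Defensive.
Import Order.TTheory GRing.Theory Num.Theory.
Local Open Scope ring_scope.

Section Defs.
Variables (R : rcfType) (n d : nat).

Definition Phi_train (Z : 'M[R]_(n, d)) (lam : 'I_d -> R) : 'M[R]_(n, d) :=
  \matrix_(i < n, j < d) (Num.sqrt (lam j) * Z i j).

Definition outer (z : 'cV[R]_n) : 'M[R]_n := z *m z^T.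

Definition Amat (Z : 'M[R]_(n, d)) (lam : 'I_d -> R) : 'M[R]_n :=
  \sum_(j < d) lam j *: outer (col j Z).

Definition Amat_minus (Z : 'M[R]_(n, d)) (lam : 'I_d -> R) (t : 'I_d) : 'M[R]_n :=
  \sum_(j < d | j != t) lam j *: outer (col j Z).

Definition Smat (Z : 'M[R]_(n, d)) (lam : 'I_d -> R) (t : 'I_d) : 'M[R]_n :=
  \sum_(j < d | j != t) (lam j ^+ 2) *: outer (col j Z).

Definition Cmat Z lam t : 'M[R]_n :=
  invmx (Amat Z lam) *m Smat Z lam t *m invmx (Amat Z lam).

Definition Ctilde Z lam t : 'M[R]_n :=
  invmx (Amat_minus Z lam t) *m Smat Z lam t *m invmx (Amat_minus Z lam t).

Definition qform (M : 'M[R]_n) (z : 'cV[R]_n) : R := (z^T *m M *m z) 0 0.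

Definition sqnorm m (v : 'cV[R]_m) : R := \sum_(i < m) v i 0 ^+ 2.

Definition is_min_norm_solution m (Phi : 'M[R]_(m, d)) (y : 'cV[R]_m)
  (alpha : 'cV[R]_d) : Prop :=
  Phi *m alpha = y /\
  forall beta : 'cV[R]_d, Phi *m beta = y -> sqnorm alpha <= sqnorm beta.

Definition SU (lam : 'I_d -> R) (t : 'I_d) (alpha : 'cV[R]_d) : R :=
  Num.sqrt (lam t) * alpha t 0.

Definition CN (lam : 'I_d -> R) (t : 'I_d) (alpha : 'cV[R]_d) : R :=
  Num.sqrt (\sum_(j < d | j != t) lam j * alpha j 0 ^+ 2).

End Defs.

From HB Require Import structures.
From mathcomp Require Import all_boot all_order all_algebra ring.
Set Implicit Arguments. Unset Strict Implicit. Unset Printing Implicit Defensive.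
Import Order.TTheory GRing.Theory Num.Theory.
Local Open Scope ring_scope.

(* Since [Phi Phi^T = A], the minimum-norm solution of [Phi alpha = z_t] is
   [alpha = Phi^T u] with [u = A^-1 z_t], so that [sqrt(lam_j) alpha_j = lam_j z_j^T u].
   Hence [CN^2 = u^T S u = z_t^T C z_t] with [S = sum_{j<>t} lam_j^2 z_j z_j^T].
   As [A = A_{-t} + lam_t z_t z_t^T] is a rank-one update, [u = c A_{-t}^-1 z_t]
   with [c = 1 / (1 + lam_t q)] and [q = z_t^T A_{-t}^-1 z_t >= 0]; this gives
   [1 - SU = 1 - lam_t c q = c] and [z_t^T C z_t = c^2 z_t^T C~ z_t]. *)

Section RankOneUpdate.
Variables (F : fieldType) (m : nat) (M : 'M[F]_m) (c : F) (z : 'cV[F]_m).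
Hypothesis M_unit : M \in unitmx.

Let q := (z^T *m invmx M *m z) 0 0.

Lemma mulmx_rank_one_update :
  (M + c *: (z *m z^T)) *m (invmx M *m z) = (1 + c * q) *: z.
Proof.
rewrite mulmxDl mulKVmx // -scalemxAl -mulmxA [z^T *m _]mulmxA.
by rewrite [_ *m z]mx11_scalar mul_mx_scalar scalerA scalerDl scale1r.
Qed.

Hypothesis q_reg : 1 + c * q != 0.

Lemma rank_one_update_unitmx : M + c *: (z *m z^T) \in unitmx.
Proof.
pose k := c / (1 + c * q).
(* Sherman-Morrison formula. *)
suff: (M + c *: (z *m z^T)) *m (invmx M - k *: (invmx M *m z *m (z^T *m invmx M)))
  = 1%:M by case/mulmx1_unit.
rewrite mulmxBr -scalemxAr mulmxA mulmx_rank_one_update mulmxDl mulmxV //.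
rewrite -!scalemxAl scalerA /k divfK // -mulmxA.
by rewrite -addrA subrr addr0.
Qed.

Lemma invmx_rank_one_update_mul :
  invmx (M + c *: (z *m z^T)) *m z = (1 + c * q)^-1 *: (invmx M *m z).
Proof.
rewrite -[RHS](mulKmx rank_one_update_unitmx) -scalemxAr.
by rewrite mulmx_rank_one_update scalerA mulVf // scale1r.
Qed.

End RankOneUpdate.

Section QuadraticForms.
Variables (R : rcfType) (n : nat).
Implicit Types (M N : 'M[R]_n) (v : 'cV[R]_n).

Lemma qformZ M (a : R) v : qform M (a *: v) = a ^+ 2 * qform M v.
Proof. by rewrite /qform -scalemxAr [(_ *: v)^T]linearZ -!scalemxAl !mxE mulrA -expr2. Qed.

Lemma qform_sandwich N M v :
  N^T = N -> qform (N *m M *m N) v = qform M (N *m v).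
Proof. by move=> N_sym; rewrite /qform trmx_mul N_sym !mulmxA. Qed.

End QuadraticForms.

Section GramSums.
Variables (R : rcfType) (n d : nat) (Z : 'M[R]_(n, d)).
Implicit Types (P : pred 'I_d) (c : 'I_d -> R) (v w : 'cV[R]_n).

Lemma colT_mulmxE (j : 'I_d) w : ((col j Z)^T *m w) 0 0 = (Z^T *m w) j 0.
Proof. by rewrite !mxE; apply: eq_bigr => i _; rewrite !mxE. Qed.

Lemma trmx_gram_sum P c :
  (\sum_(j < d | P j) c j *: outer (col j Z))^T =
  \sum_(j < d | P j) c j *: outer (col j Z).
Proof.
rewrite linear_sum; apply: eq_bigr => j _.
by rewrite linearZ /= /outer trmx_mul trmxK.
Qed.

Lemma bilinear_gram_sum P c v w :
  (v^T *m (\sum_(j < d | P j) c j *: outer (col j Z)) *m w) 0 0 =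
  \sum_(j < d | P j) c j * ((Z^T *m v) j 0 * (Z^T *m w) j 0).
Proof.
rewrite mulmx_sumr mulmx_suml summxE; apply: eq_bigr => j _.
rewrite -scalemxAr -scalemxAl mxE /outer !mulmxA -[_ *m w]mulmxA.
rewrite [_ *m col j Z]mx11_scalar mul_scalar_mx mxE colT_mulmxE.
by rewrite -[v^T *m _]trmxK trmx_mul trmxK mxE colT_mulmxE.
Qed.

Lemma qform_gram_sum_ge0 P c v : (forall j, P j -> 0 <= c j) ->
  0 <= qform (\sum_(j < d | P j) c j *: outer (col j Z)) v.
Proof.
move=> c_ge0; rewrite /qform bilinear_gram_sum.
by apply: sumr_ge0 => j Pj; rewrite -expr2 mulr_ge0 ?sqr_ge0 ?c_ge0.
Qed.

End GramSums.

Section MinNormSolution.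
Variables (R : rcfType) (m d : nat) (Phi : 'M[R]_(m, d)) (y : 'cV[R]_m).
Implicit Types (a b alpha : 'cV[R]_d).

Lemma sqnormD a b : sqnorm (a + b) = sqnorm a + 2 * (a^T *m b) 0 0 + sqnorm b.
Proof.
rewrite /sqnorm mxE mulr_sumr -!big_split; apply: eq_bigr => i _.
by rewrite !mxE /=; ring.
Qed.

Lemma sqnorm_eq0 a : sqnorm a = 0 -> a = 0.
Proof.
move=> /eqP; rewrite psumr_eq0 => [/allP a0|i _]; last exact: sqr_ge0.
apply/matrixP => i j; rewrite (ord1 j) !mxE.
by apply/eqP; rewrite -sqrf_eq0; apply: a0; rewrite mem_index_enum.
Qed.

(* Pythagoras: [Phi^T v] is orthogonal to the kernel of [Phi]. *)
Lemma min_norm_solution_row_space (v : 'cV[R]_m) alpha :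
  Phi *m (Phi^T *m v) = y -> is_min_norm_solution Phi y alpha ->
  alpha = Phi^T *m v.
Proof.
set a0 := Phi^T *m v => a0_sol [alpha_sol alpha_min].
have cross : (a0^T *m (alpha - a0)) 0 0 = 0.
  by rewrite trmx_mul trmxK -mulmxA mulmxBr alpha_sol a0_sol subrr mulmx0 mxE.
have := alpha_min a0 a0_sol.
rewrite -[alpha in sqnorm alpha](subrK a0) addrC sqnormD cross mulr0 addr0.
rewrite gerDl => le0; apply/eqP; rewrite -subr_eq0; apply/eqP/sqnorm_eq0.
by apply/eqP; rewrite eq_le le0 sumr_ge0 // => i _; rewrite sqr_ge0.
Qed.

End MinNormSolution.

Section Features.
Variables (R : rcfType) (n d : nat) (Z : 'M[R]_(n, d)) (lam : 'I_d -> R).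
Hypothesis lam_ge0 : forall j, 0 <= lam j.

Lemma Phi_train_mul_tr : Phi_train Z lam *m (Phi_train Z lam)^T = Amat Z lam.
Proof.
apply/matrixP => i k; rewrite !mxE summxE; apply: eq_bigr => j _.
by rewrite !mxE big_ord1 !mxE mulrACA -expr2 sqr_sqrtr.
Qed.

Lemma Phi_train_tr_mulE (v : 'cV[R]_n) j :
  ((Phi_train Z lam)^T *m v) j 0 = Num.sqrt (lam j) * (Z^T *m v) j 0.
Proof. by rewrite !mxE mulr_sumr; apply: eq_bigr => i _; rewrite !mxE mulrA. Qed.

Lemma SU_Phi_train_tr t (v : 'cV[R]_n) :
  SU lam t ((Phi_train Z lam)^T *m v) = lam t * ((col t Z)^T *m v) 0 0.
Proof. by rewrite /SU Phi_train_tr_mulE mulrA -expr2 sqr_sqrtr // colT_mulmxE. Qed.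

Lemma CN_Phi_train_tr t (v : 'cV[R]_n) :
  CN lam t ((Phi_train Z lam)^T *m v) = Num.sqrt (qform (Smat Z lam t) v).
Proof.
rewrite /CN /qform bilinear_gram_sum; congr Num.sqrt; apply: eq_bigr => j _.
by rewrite Phi_train_tr_mulE exprMn sqr_sqrtr // -mulrA -expr2 mulrA.
Qed.

Lemma Amat_bigD1 t : Amat Z lam = Amat_minus Z lam t + lam t *: outer (col t Z).
Proof. by rewrite /Amat (bigD1 t) //= addrC. Qed.

End Features.

Theorem lemma10 (R : rcfType) (n d : nat) (Z : 'M[R]_(n, d))
  (lam : 'I_d -> R) (t : 'I_d) (alpha : 'cV[R]_d) :
  (n <= d)%N ->
  (forall j, 0 < lam j) ->
  Amat_minus Z lam t \in unitmx ->
  is_min_norm_solution (Phi_train Z lam) (col t Z) alpha ->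
  CN lam t alpha = Num.sqrt (qform (Cmat Z lam t) (col t Z)) /\
  Num.sqrt (qform (Cmat Z lam t) (col t Z)) =
    `|1 - SU lam t alpha| * Num.sqrt (qform (Ctilde Z lam t) (col t Z)).
Proof.
move=> _ lam_gt0 Am_unit alpha_min.
have lam_ge0 j : 0 <= lam j by exact: ltW.
set z := col t Z; set A := Amat Z lam; set Am := Amat_minus Z lam t.
set w := invmx Am *m z; set q := (z^T *m invmx Am *m z) 0 0.
have Am_sym : Am^T = Am by exact: trmx_gram_sum.
have q_ge0 : 0 <= q.
  rewrite /q -mulmxA -[z in z^T](mulKVmx Am_unit) trmx_mul Am_sym.
  exact: qform_gram_sum_ge0.
have q_reg : 1 + lam t * q != 0 by rewrite gt_eqF // ltr_wpDr ?mulr_ge0.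
set c := (1 + lam t * q)^-1.
have A_unit : A \in unitmx by rewrite /A (Amat_bigD1 Z lam t) rank_one_update_unitmx.
have u_eq : invmx A *m z = c *: w.
  by rewrite /A (Amat_bigD1 Z lam t) invmx_rank_one_update_mul.
have alphaE : alpha = (Phi_train Z lam)^T *m (invmx A *m z).
  apply: min_norm_solution_row_space alpha_min.
  by rewrite mulmxA Phi_train_mul_tr // mulKVmx.
have C_eq : qform (Cmat Z lam t) z = qform (Smat Z lam t) (c *: w).
  by rewrite -u_eq qform_sandwich // trmx_inv trmx_gram_sum.
have Ct_eq : qform (Ctilde Z lam t) z = qform (Smat Z lam t) w.
  by rewrite qform_sandwich // trmx_inv Am_sym.
have SU_eq : 1 - SU lam t alpha = c.
  by rewrite alphaE SU_Phi_train_tr // u_eq -scalemxAr mxE mulmxA -/q /c; field.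
split; first by rewrite alphaE CN_Phi_train_tr // u_eq C_eq.
by rewrite SU_eq C_eq Ct_eq qformZ sqrtrM ?sqr_ge0 // sqrtr_sqr.
Qed.
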